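(* Let $D\subseteq\mathbb{R}^{p+2}$ be a domain invariant under $(\mathbf{x}_p,r)\mapsto(\mathbf{x}_p,-r)$ and let $f(\mathbf{x})=F_1(\mathbf{x}')+\underline{\omega}F_2(\mathbf{x}')$ be a generalized partial-slice function on $\Omega_D$ induced by a $C^1$ stem function, with $f\in C^1(\Omega_D,\mathbb{A})$. Then $f$ is monogenic on $\Omega_D$ (i.e. $D_{\mathbf{x}}f=0$) if and only if $$D_{\mathbf{x}_p}F_1(\mathbf{x}')-\partial_rF_2(\mathbf{x}')=\frac{q-1}{r}F_2(\mathbf{x}'),\qquad \overline{D}_{\mathbf{x}_p}F_2(\mathbf{x}')+\partial_rF_1(\mathbf{x}')=0,\qquad \mathbf{x}'=(\mathbf{x}_p,r)\in D,\ r\neq0.$$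
   Context: Let $\mathbb{A}$ be a real alternative algebra (the associator $[a,b,c]=(ab)c-a(bc)$ is an alternating trilinear function) with unity $1$, of finite real dimension $d>1$, equipped with an anti-involution $a\mapsto a^c$ (real linear, $a^c=a$ for real $a$, $(a^c)^c=a$, $(ab)^c=b^ca^c$). Let $t(x)=x+x^c$, $n(x)=xx^c$, $\mathbb{S}_{\mathbb{A}}=\{x: t(x)=0,\ n(x)=1\}$ (assumed nonempty) and $Q_{\mathbb{A}}=\mathbb{R}\cup\{x: t(x)\in\mathbb{R},\ n(x)\in\mathbb{R},\ 4n(x)>t(x)^2\}$. Let $M$ be a real subspace with $\mathbb{R}\subsetneq M\subseteq Q_{\mathbb{A}}$ having a basis $(v_0,\dots,v_m)$, $m\ge1$, $v_0=1$, $v_s\in\mathbb{S}_{\mathbb{A}}$, $v_sv_t=-v_tv_s$ for distinct $s,t\ge1$; complete it to a basis of $\mathbb{A}$ with associated Euclidean norm. Identify $x=\sum x_sv_s\in M$ with $(x_0,\dots,x_m)\in\mathbb{R}^{m+1}$; differentiate componentwise. Fix $p\in\{0,\dots,m-1\}$, $q=m-p$; $\mathbf{x}=\mathbf{x}_p+\underline{\mathbf{x}}_q$ with $\mathbf{x}_p=\sum_{s=0}^px_sv_s\in\mathbb{R}^{p+1}$, $\underline{\mathbf{x}}_q=\sum_{s=p+1}^m x_sv_s$; $\mathbb{S}=\{\sum_{s=p+1}^m x_sv_s:\sum x_s^2=1\}$; $\underline{\mathbf{x}}_q=r\underline{\omega}$, $r=|\underline{\mathbf{x}}_q|$; $\mathbf{x}'=(\mathbf{x}_p,r)$.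 $D_{\mathbf{x}_p}f=\sum_{s=0}^p v_s\partial_{x_s}f$, $\overline{D}_{\mathbf{x}_p}f=\partial_{x_0}f-\sum_{s=1}^pv_s\partial_{x_s}f$, $D_{\mathbf{x}}f=\sum_{s=0}^mv_s\partial_{x_s}f$. $\Omega_D=\{\mathbf{x}_p+r\underline{\omega}:(\mathbf{x}_p,r)\in D,\ r\ge0,\ \underline{\omega}\in\mathbb{S}\}$. A stem function $(F_1,F_2):D\to\mathbb{A}^2$ has $F_1$ even and $F_2$ odd in $r$ and induces the generalized partial-slice function $f(\mathbf{x}_p+r\underline{\omega})=F_1(\mathbf{x}')+\underline{\omega}F_2(\mathbf{x}')$. *)

From HB Require Import structures.
From mathcomp Require Import all_boot all_order all_algebra.
From mathcomp Require Import all_classical all_reals all_analysis.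
Set Implicit Arguments. Unset Strict Implicit. Unset Printing Implicit Defensive.
Import Order.TTheory GRing.Theory Num.Theory.
Import numFieldNormedType.Exports.
Local Open Scope classical_set_scope.
Local Open Scope ring_scope.

(* The algebra A is modelled on its underlying real vector space
   'rV[R]_d.+1 (finite dimension d.+1), with a bilinear product [mul],
   unity [one] and anti-involution [conj]. *)

Definition assoc (R : realType) (d : nat)
  (mul : 'rV[R]_d.+1 -> 'rV[R]_d.+1 -> 'rV[R]_d.+1) (a b c : 'rV[R]_d.+1) :=
  mul (mul a b) c - mul a (mul b c).

Definition alt_algebra_anti_inv (R : realType) (d : nat)
  (mul : 'rV[R]_d.+1 -> 'rV[R]_d.+1 -> 'rV[R]_d.+1) (one : 'rV[R]_d.+1)
  (conj : 'rV[R]_d.+1 -> 'rV[R]_d.+1) : Prop :=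
  (forall (k : R) a b c, mul (k *: a + b) c = k *: mul a c + mul b c) /\
  (forall (k : R) a b c, mul c (k *: a + b) = k *: mul c a + mul c b) /\
  (forall a, mul one a = a /\ mul a one = a) /\
  (forall a b, assoc mul a a b = 0 /\ assoc mul a b a = 0 /\ assoc mul b a a = 0) /\
  (forall (k : R) a b, conj (k *: a + b) = k *: conj a + conj b) /\
  (forall k : R, conj (k *: one) = k *: one) /\
  (forall a, conj (conj a) = a) /\
  (forall a b, conj (mul a b) = mul (conj b) (conj a)).

Definition is_realA (R : realType) (d : nat) (one : 'rV[R]_d.+1) (a : 'rV[R]_d.+1) :=
  exists k : R, a = k *: one.

Definition trA (R : realType) (d : nat) (conj : 'rV[R]_d.+1 -> 'rV[R]_d.+1) a :=
  a + conj a.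

Definition nA (R : realType) (d : nat)
  (mul : 'rV[R]_d.+1 -> 'rV[R]_d.+1 -> 'rV[R]_d.+1)
  (conj : 'rV[R]_d.+1 -> 'rV[R]_d.+1) a := mul a (conj a).

Definition in_SA (R : realType) (d : nat)
  (mul : 'rV[R]_d.+1 -> 'rV[R]_d.+1 -> 'rV[R]_d.+1) (one : 'rV[R]_d.+1)
  (conj : 'rV[R]_d.+1 -> 'rV[R]_d.+1) (a : 'rV[R]_d.+1) :=
  trA conj a = 0 /\ nA mul conj a = one.

Definition in_QA (R : realType) (d : nat)
  (mul : 'rV[R]_d.+1 -> 'rV[R]_d.+1 -> 'rV[R]_d.+1) (one : 'rV[R]_d.+1)
  (conj : 'rV[R]_d.+1 -> 'rV[R]_d.+1) (a : 'rV[R]_d.+1) :=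
  is_realA one a \/
  exists t n : R, trA conj a = t *: one /\ nA mul conj a = n *: one /\
                  t ^+ 2 < 4 * n.

(* (v_0,...,v_m) is a basis of a subspace M with R ⊊ M ⊆ Q_A as in the paper *)
Definition admissible_basis (R : realType) (d m : nat)
  (mul : 'rV[R]_d.+1 -> 'rV[R]_d.+1 -> 'rV[R]_d.+1) (one : 'rV[R]_d.+1)
  (conj : 'rV[R]_d.+1 -> 'rV[R]_d.+1) (v : 'I_m.+1 -> 'rV[R]_d.+1) : Prop :=
  v ord0 = one /\
  (forall s, s != ord0 -> in_SA mul one conj (v s)) /\
  (forall s t, s != ord0 -> t != ord0 -> s != t ->
      mul (v s) (v t) = - mul (v t) (v s)) /\
  (forall c : 'I_m.+1 -> R, \sum_(s < m.+1) c s *: v s = 0 -> forall s, c s = 0) /\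
  (forall c : 'I_m.+1 -> R, in_QA mul one conj (\sum_(s < m.+1) c s *: v s)).

(* the element sum_s x_s v_s of M identified with x in R^{m+1} *)
Definition embA (R : realType) (d m : nat) (v : 'I_m.+1 -> 'rV[R]_d.+1)
  (x : 'rV[R]_m.+1) : 'rV[R]_d.+1 := \sum_(s < m.+1) x 0 s *: v s.

Definition pd (R : realType) (n d : nat) (F : 'rV[R]_n.+1 -> 'rV[R]_d.+1)
  (x : 'rV[R]_n.+1) (i : 'I_n.+1) : 'rV[R]_d.+1 :=
  'D_(delta_mx 0 i) F x.

Definition C1_on (R : realType) (n d : nat) (U : set 'rV[R]_n.+1)
  (F : 'rV[R]_n.+1 -> 'rV[R]_d.+1) : Prop :=
  (forall x, U x -> forall i : 'I_n.+1, derivable F x (delta_mx 0 i)) /\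
  (forall i : 'I_n.+1, {within U, continuous (fun x => pd F x i)}).

(* points of R^{p+2} are (x_0,...,x_p, r); r is the last coordinate ord_max *)
Definition rcoord (R : realType) (p : nat) (y : 'rV[R]_p.+2) : R := y 0 ord_max.

Definition reflect_r (R : realType) (p : nat) (y : 'rV[R]_p.+2) : 'rV[R]_p.+2 :=
  \row_(i < p.+2) (if i == ord_max then - y 0 i else y 0 i).

(* x_p = sum_{s<=p} y_s v_s viewed in R^{m+1} *)
Definition xp_embed (R : realType) (p m : nat) (y : 'rV[R]_p.+2) : 'rV[R]_m.+1 :=
  \row_(s < m.+1) (if (s <= p)%N then y 0 (inord s) else 0).

(* the sphere S of unit vectors in span(v_{p+1},...,v_m), in coordinates *)
Definition in_sphere (R : realType) (p m : nat) (w : 'rV[R]_m.+1) : Prop :=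
  (forall s : 'I_m.+1, (s <= p)%N -> w 0 s = 0) /\
  \sum_(s < m.+1) w 0 s ^+ 2 = 1.

Definition OmegaD (R : realType) (p m : nat) (D : set 'rV[R]_p.+2) :
  set 'rV[R]_m.+1 :=
  [set x | exists (y : 'rV[R]_p.+2) (w : 'rV[R]_m.+1),
     D y /\ 0 <= rcoord y /\ in_sphere p w /\
     x = xp_embed m y + rcoord y *: w].

Definition stem_function (R : realType) (p d : nat) (D : set 'rV[R]_p.+2)
  (F1 F2 : 'rV[R]_p.+2 -> 'rV[R]_d.+1) : Prop :=
  forall y, D y -> F1 (reflect_r y) = F1 y /\ F2 (reflect_r y) = - F2 y.

Definition induced_by (R : realType) (p m d : nat)
  (mul : 'rV[R]_d.+1 -> 'rV[R]_d.+1 -> 'rV[R]_d.+1)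
  (v : 'I_m.+1 -> 'rV[R]_d.+1) (D : set 'rV[R]_p.+2)
  (F1 F2 : 'rV[R]_p.+2 -> 'rV[R]_d.+1) (f : 'rV[R]_m.+1 -> 'rV[R]_d.+1) : Prop :=
  forall (y : 'rV[R]_p.+2) (w : 'rV[R]_m.+1), D y -> 0 <= rcoord y -> in_sphere p w ->
    f (xp_embed m y + rcoord y *: w) = F1 y + mul (embA v w) (F2 y).

Definition Dx (R : realType) (m d : nat)
  (mul : 'rV[R]_d.+1 -> 'rV[R]_d.+1 -> 'rV[R]_d.+1)
  (v : 'I_m.+1 -> 'rV[R]_d.+1) (f : 'rV[R]_m.+1 -> 'rV[R]_d.+1) x :=
  \sum_(s < m.+1) mul (v s) (pd f x s).

Definition Dxp (R : realType) (p m d : nat)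
  (mul : 'rV[R]_d.+1 -> 'rV[R]_d.+1 -> 'rV[R]_d.+1)
  (v : 'I_m.+1 -> 'rV[R]_d.+1) (F : 'rV[R]_p.+2 -> 'rV[R]_d.+1) y :=
  \sum_(0 <= s < p.+1) mul (v (inord s)) (pd F y (inord s)).

Definition Dxp_bar (R : realType) (p m d : nat)
  (mul : 'rV[R]_d.+1 -> 'rV[R]_d.+1 -> 'rV[R]_d.+1)
  (v : 'I_m.+1 -> 'rV[R]_d.+1) (F : 'rV[R]_p.+2 -> 'rV[R]_d.+1) y :=
  pd F y ord0 - \sum_(1 <= s < p.+1) mul (v (inord s)) (pd F y (inord s)).

From HB Require Import structures.
From mathcomp Require Import all_boot all_order all_algebra.
From mathcomp Require Import all_classical all_reals all_analysis.
From mathcomp Require Import ring.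
Import Order.TTheory GRing.Theory Num.Theory.
Import numFieldNormedType.Exports.
Local Open Scope classical_set_scope.
Local Open Scope ring_scope.

Set Implicit Arguments. Unset Strict Implicit.

(* Write x = x_p + r w with w on the sphere S, and put w' := sum_s w_s v_s.
   At points with r <> 0 the chain rule gives
     D_x f = (D_{x_p} F1 - d_r F2 - (q-1)/r F2) + w' (Dbar_{x_p} F2 + d_r F1):
   the coordinates x_0..x_p only move (x_p, r) and w' anticommutes with
   v_1..v_p, while moving along v_s (s > p) changes r by w_s and w by
   (e_s - w_s w)/r, and sum_{s>p} v_s (v_s - w_s w') = -(q - 1).
   Both brackets are independent of w, so evaluating at w and -w separates
   them, and w'^2 = -1 recovers the second one from its product with w'.
   Points of Omega_D with r = 0 are limits of points with r > 0, where D_x f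
   vanishes, and D_x f is continuous on Omega_D. *)

Section LinearRowMaps.
Variables (R : realType) (n k : nat) (L : 'rV[R]_n -> 'rV[R]_k).
Hypothesis linL : linear L.

Let Llin : {linear 'rV[R]_n -> 'rV[R]_k} :=
  HB.pack L (GRing.isLinear.Build R _ _ _ L linL).

Lemma linear_rV_expand u : L u = \sum_(i < n) u 0 i *: L (delta_mx 0 i).
Proof.
have -> : L u = Llin (\sum_(i < n) u 0 i *: delta_mx 0 i) by rewrite -row_sum_delta.
by rewrite linear_sum; apply: eq_bigr => i _; rewrite linearZ.
Qed.

Lemma linear_rV_continuous u : {for u, continuous L}.
Proof.
rewrite (_ : L = fun z => \sum_(i < n) z 0 i *: L (delta_mx 0 i)).
  apply: (@cvg_big _ _ _ _ _ _ _ (nbhs u)) => [|i _]; first exact: add_continuous.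
  by apply: cvgZ; [exact: coord_continuous|exact: cvg_cst].
by apply/funext => z; apply: linear_rV_expand.
Qed.

End LinearRowMaps.

Section RowDerivatives.
Variables (R : realType) (V : normedModType R).

Lemma is_derive_mxP a b (g : V -> 'M[R]_(a, b)) x v dg :
  is_derive x v g dg <-> forall i j, is_derive x v (fun t => g t i j) (dg i j).
Proof.
split=> [[dg_ex <-] i j|dgij].
  have /derivable_mxP/(_ i j) dij := dg_ex.
  by apply: DeriveDef => //; rewrite derive_mx // mxE.
have dg_ex : derivable g x v by apply/derivable_mxP => i j; case: (dgij i j).
apply: DeriveDef => //; rewrite derive_mx //; apply/matrixP => i j.
by rewrite mxE; case: (dgij i j).
Qed.

Lemma is_derive_scale a b (c : V -> R) (u : V -> 'M[R]_(a, b)) x v dc du :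
  is_derive x v c dc -> is_derive x v u du ->
  is_derive x v (fun t => c t *: u t) (dc *: u x + c x *: du).
Proof.
move=> dc_ex /is_derive_mxP du_ex; apply/is_derive_mxP => i j.
rewrite !mxE (_ : (fun t => _) = c * (fun t => u t i j)); last first.
  by apply/funext => t; rewrite mxE.
have [dcu_ex dcu] := is_deriveM dc_ex (du_ex i j).
apply: DeriveDef => //; rewrite dcu addrC; congr (_ + _); exact: mulrC.
Qed.

Lemma is_derive_linear n k (L : 'rV[R]_n -> 'rV[R]_k) (u : V -> 'rV[R]_n) x v du :
  linear L -> is_derive x v u du -> is_derive x v (fun t => L (u t)) (L du).
Proof.
move=> linL /is_derive_mxP du_ex.
rewrite (linear_rV_expand linL du) (_ : (fun t => _) =
  \sum_(i < n) (fun t => u t 0 i *: L (delta_mx 0 i))); last first.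
  by apply/funext => t; rewrite fct_sumE; apply: linear_rV_expand.
apply: is_derive_sum => i.
have := is_derive_scale (u := fun=> L (delta_mx 0 i)) (du_ex 0 i) (is_derive_cst _ x v).
by rewrite scaler0 addr0.
Qed.

Lemma is_derive_bilinear n k (B : 'rV[R]_n -> 'rV[R]_n -> 'rV[R]_k)
    (a b : V -> 'rV[R]_n) x v da db :
  (forall z, linear (B^~ z)) -> (forall z, linear (B z)) ->
  is_derive x v a da -> is_derive x v b db ->
  is_derive x v (fun t => B (a t) (b t)) (B da (b x) + B (a x) db).
Proof.
move=> linBl linBr /is_derive_mxP da_ex db_ex.
rewrite (linear_rV_expand (linBl _) da) (linear_rV_expand (linBl _) (a x)).
rewrite -big_split /= (_ : (fun t => _) =
  \sum_(i < n) (fun t => a t 0 i *: B (delta_mx 0 i) (b t))); last first.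
  by apply/funext => t; rewrite fct_sumE; apply: (linear_rV_expand (linBl _)).
apply: is_derive_sum => i.
exact: is_derive_scale (da_ex 0 i) (is_derive_linear (linBr _) db_ex).
Qed.

End RowDerivatives.

Section RealCurves.
Variable R : realType.

Lemma is_derive_line n (e y : 'rV[R]_n) (x : R) :
  is_derive x 1 (fun h : R => h *: e + y) e.
Proof.
have := is_deriveD (is_derive_scale (is_derive_id x 1) (is_derive_cst e x 1))
  (is_derive_cst y x 1) => /=.
by rewrite scale1r scaler0 !addr0.
Qed.

Lemma is_derive_comp_real a b (G : R -> 'M[R]_(a, b)) (rho : R -> R) x dG drho :
  is_derive (rho x) 1 G dG -> is_derive x 1 rho drho ->
  is_derive x 1 (fun t => G (rho t)) (drho *: dG).
Proof.
move=> /is_derive_mxP dG_ex drho_ex; apply/is_derive_mxP => i j.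
have := is_derive1_comp (dG_ex i j) drho_ex.
by rewrite mxE mulrC.
Qed.

Lemma is_derive_dirP n k (F : 'rV[R]_n -> 'rV[R]_k) y e dF :
  is_derive y e F dF <-> is_derive (0 : R) 1 (fun h : R => F (h *: e + y)) dF.
Proof.
have DE : 'D_e F y = 'D_1 (fun h : R => F (h *: e + y)) (0 : R).
  rewrite /derive; set g1 := fun h => h^-1 *: _; set g2 := fun h => h^-1 *: _.
  suff -> : g1 = g2 by [].
  by apply/funext => h; rewrite /g1 /g2 /= addr0 scale0r add0r [_%:A]mulr1.
split=> [[Fe <-]|[Fe <-]].
  by apply: DeriveDef; [exact: (derivable1P F y e).1 | rewrite DE].
by apply: DeriveDef; [exact/derivable1P | rewrite DE].
Qed.

Lemma near_is_derive_in (W : normedModType R) (A : set W) (g : R -> W) x dg :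
  open A -> A (g x) -> is_derive x 1 g dg -> \forall h \near x, A (g h).
Proof.
move=> oA Agx [g_ex _].
have cg : {for x, continuous g}.
  by apply: differentiable_continuous; apply/derivable1_diffP.
by apply: cg; move: oA; rewrite openE; apply.
Qed.

End RealCurves.

Lemma twice_inj (R : numFieldType) (V : lmodType R) (a b : V) : a + a = b + b -> a = b.
Proof.
move=> aabb; apply: (@scalerI _ _ 2); first by rewrite pnatr_eq0.
by rewrite !scaler_nat !mulr2n.
Qed.

Lemma add_sub_eq0 (R : numFieldType) (V : lmodType R) (a c : V) :
  a + c = 0 -> a - c = 0 -> a = 0 /\ c = 0.
Proof.
move=> ac0 aNc0; have : (a + c) + (a - c) = 0 + 0 by rewrite ac0 aNc0.
rewrite addrACA subrr addr0 => /twice_inj a0.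
by split=> //; move: ac0; rewrite a0 add0r.
Qed.

Section AlternativeAlgebra.
Variables (R : realType) (d : nat).
Local Notation A := 'rV[R]_d.+1.
Variables (mul : A -> A -> A) (one : A) (conj : A -> A).
Hypothesis algA : alt_algebra_anti_inv mul one conj.

Lemma amul_linear_l c : linear (mul^~ c).
Proof. by case: algA => mulD _ k a b; apply: mulD. Qed.

Lemma amul_linear_r c : linear (mul c).
Proof. by case: algA => _ [mulD _] k a b; apply: mulD. Qed.

Let amull c : {linear A -> A} :=
  HB.pack (mul^~ c) (GRing.isLinear.Build R _ _ _ _ (amul_linear_l c)).
Let amulr c : {linear A -> A} :=
  HB.pack (mul c) (GRing.isLinear.Build R _ _ _ _ (amul_linear_r c)).

Lemma amul0r a : mul a 0 = 0. Proof. exact: linear0 (amulr a). Qed.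
Lemma amulDl a b c : mul (a + b) c = mul a c + mul b c.
Proof. exact: (raddfD (amull c) a b). Qed.
Lemma amulDr a b c : mul c (a + b) = mul c a + mul c b.
Proof. exact: (raddfD (amulr c) a b). Qed.
Lemma amulZl k a c : mul (k *: a) c = k *: mul a c.
Proof. exact: (linearZZ (amull c) k a). Qed.
Lemma amulZr k a c : mul c (k *: a) = k *: mul c a.
Proof. exact: (linearZZ (amulr c) k a). Qed.
Lemma amulNl a c : mul (- a) c = - mul a c.
Proof. exact: (raddfN (amull c) a). Qed.
Lemma amulNr a c : mul c (- a) = - mul c a.
Proof. exact: (raddfN (amulr c) a). Qed.
Lemma amulBr a b c : mul c (a - b) = mul c a - mul c b.
Proof. exact: (raddfB (amulr c) a b). Qed.
Lemma amul_suml I (r : seq I) (P : pred I) (F : I -> A) c :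
  mul (\sum_(i <- r | P i) F i) c = \sum_(i <- r | P i) mul (F i) c.
Proof. exact: (linear_sum (amull c) r P F). Qed.
Lemma amul_sumr I (r : seq I) (P : pred I) (F : I -> A) c :
  mul c (\sum_(i <- r | P i) F i) = \sum_(i <- r | P i) mul c (F i).
Proof. exact: (linear_sum (amulr c) r P F). Qed.

Lemma amul1l a : mul one a = a.
Proof. by case: algA => _ [_ [unit _]]; case: (unit a). Qed.

Lemma left_alternative a b : mul (mul a a) b = mul a (mul a b).
Proof.
case: algA => _ [_ [_ [alt _]]]; case: (alt a b) => aab _.
by apply/eqP; rewrite -subr_eq0; apply/eqP.
Qed.

Lemma left_alternative_lin a b c :
  mul (mul a b) c + mul (mul b a) c = mul a (mul b c) + mul b (mul a c).
Proof.
have := left_alternative (a + b) c.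
rewrite !amulDl !amulDr !amulDl !left_alternative -!addrA => /addrI.
by rewrite !addrA => /addIr.
Qed.

Variables (m p : nat) (v : 'I_m.+1 -> A).
Hypothesis basis_v : admissible_basis mul one conj v.

Lemma basis0 : v ord0 = one.
Proof. by case: basis_v. Qed.

Lemma basis_sqr s : s != ord0 -> mul (v s) (v s) = - one.
Proof.
case: basis_v => _ [unit_v _] /unit_v [tr_v n_v].
have conj_v : conj (v s) = - v s by apply/eqP; rewrite -addr_eq0 addrC; apply/eqP.
by move: n_v; rewrite /nA conj_v amulNr => <-; rewrite opprK.
Qed.

Lemma basis_anticomm s t : s != ord0 -> t != ord0 -> s != t ->
  mul (v s) (v t) = - mul (v t) (v s).
Proof. by case: basis_v => _ [_ [anti _]]; apply: anti. Qed.

Variable w : 'rV[R]_m.+1.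
Hypothesis sphere_w : in_sphere p w.
Local Notation om := (embA v w).

Lemma sphere_support s : w 0 s != 0 -> s != ord0 /\ ~~ (s <= p)%N.
Proof.
case: sphere_w => low_w _ ws; have sp : ~~ (s <= p)%N.
  by apply: contra ws => /low_w ->.
by split=> //; apply: contraNneq sp => ->.
Qed.

Lemma sphere_sqr : mul om om = - one.
Proof.
pose X s t := (w 0 s * w 0 t) *: mul (v s) (v t).
have omE : mul om om = \sum_(s < m.+1) \sum_(t < m.+1) X s t.
  rewrite /embA amul_suml; apply: eq_bigr => s _.
  rewrite amulZl amul_sumr scaler_sumr; apply: eq_bigr => t _.
  by rewrite amulZr scalerA.
have X_anti s t : s != t -> X s t + X t s = 0.
  move=> st; rewrite /X.
  have [->|ws] := eqVneq (w 0 s) 0; first by rewrite mul0r mulr0 !scale0r addr0.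
  have [->|wt] := eqVneq (w 0 t) 0; first by rewrite mul0r mulr0 !scale0r addr0.
  have [[s0 _] [t0 _]] := (sphere_support ws, sphere_support wt).
  by rewrite (basis_anticomm s0 t0 st) scalerN mulrC addNr.
apply: twice_inj; rewrite {1}omE exchange_big omE -big_split /=.
rewrite (eq_bigr (fun s => X s s + X s s)); last first.
  move=> s _; rewrite -big_split (bigD1 s) //= big1 ?addr0 // => t ts.
  by rewrite X_anti // eq_sym.
rewrite big_split /=; suff -> : \sum_(s < m.+1) X s s = - one by [].
rewrite (eq_bigr (fun s => w 0 s ^+ 2 *: - one)) => [|s _].
  by rewrite -scaler_suml; case: sphere_w => _ ->; rewrite scale1r.
have [ws0|ws] := eqVneq (w 0 s) 0; first by rewrite /X ws0 mul0r expr0n !scale0r.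
by rewrite /X basis_sqr ?expr2 //; case: (sphere_support ws).
Qed.

Lemma sphere_mulK a : mul om (mul om a) = - a.
Proof. by rewrite -left_alternative sphere_sqr amulNl amul1l. Qed.

Lemma basis_sphere_anticomm s : s != ord0 -> (s <= p)%N ->
  mul (v s) om = - mul om (v s).
Proof.
move=> s0 sp; rewrite /embA amul_sumr amul_suml -sumrN; apply: eq_bigr => t _.
rewrite amulZr amulZl.
have [->|wt] := eqVneq (w 0 t) 0; first by rewrite !scale0r oppr0.
have [t0 tp] := sphere_support wt.
have st : s != t by apply: contraNneq tp => <-.
by rewrite basis_anticomm // scalerN.
Qed.

Lemma basis_sphere_mul s a : s != ord0 -> (s <= p)%N ->
  mul (v s) (mul om a) = - mul om (mul (v s) a).
Proof.
move=> s0 sp; have := left_alternative_lin (v s) om a.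
rewrite basis_sphere_anticomm // amulNl addNr => /esym/eqP.
by rewrite addr_eq0 => /eqP.
Qed.

End AlternativeAlgebra.

Section Coordinates.
Variables (R : realType) (d m p : nat).

Lemma embA_linear (v : 'I_m.+1 -> 'rV[R]_d.+1) : linear (embA v).
Proof.
move=> k a b; rewrite /embA scaler_sumr -big_split; apply: eq_bigr => s _.
by rewrite !mxE scalerDl scalerA.
Qed.

Let embA_lin v : {linear 'rV[R]_m.+1 -> 'rV[R]_d.+1} :=
  HB.pack (embA v) (GRing.isLinear.Build R _ _ _ _ (embA_linear v)).

Lemma embAN (v : 'I_m.+1 -> 'rV[R]_d.+1) a : embA v (- a) = - embA v a.
Proof. exact: (raddfN (embA_lin v) a). Qed.

Lemma embAZ (v : 'I_m.+1 -> 'rV[R]_d.+1) k a : embA v (k *: a) = k *: embA v a.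
Proof. exact: (linearZZ (embA_lin v) k a). Qed.

Lemma embA_delta (v : 'I_m.+1 -> 'rV[R]_d.+1) j : embA v 'e_j = v j.
Proof.
rewrite /embA (bigD1 j) //= big1 ?addr0 => [|s sj]; first by rewrite mxE !eqxx scale1r.
by rewrite mxE eqxx /= (negbTE sj) scale0r.
Qed.

Lemma inord_low_neq_max s : (s <= p)%N -> (inord s : 'I_p.+2) != ord_max.
Proof.
move=> sp; apply/eqP => /(congr1 val) /=; rewrite inordK; last by rewrite ltnS ltnW.
by move=> sE; move: sp; rewrite sE ltnn.
Qed.

Lemma rcoord_shift_max h (y : 'rV[R]_p.+2) : rcoord (h *: 'e_ord_max + y) = h + rcoord y.
Proof. by rewrite /rcoord !mxE !eqxx mulr1. Qed.

Lemma xp_embed_shift_max h (y : 'rV[R]_p.+2) :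
  xp_embed m (h *: 'e_ord_max + y) = xp_embed m y.
Proof.
apply/matrixP => i s; rewrite !mxE; case: ifP => // sp.
by rewrite eqxx (negbTE (inord_low_neq_max sp)) mulr0 add0r.
Qed.

Lemma rcoord_shift_low h (y : 'rV[R]_p.+2) (j : 'I_m.+1) : (j <= p)%N ->
  rcoord (h *: 'e_(inord j) + y) = rcoord y.
Proof.
move=> jp; rewrite /rcoord !mxE eqxx eq_sym (negbTE (inord_low_neq_max jp)).
by rewrite mulr0 add0r.
Qed.

Lemma xp_embed_shift_low h (y : 'rV[R]_p.+2) (j : 'I_m.+1) : (j <= p)%N ->
  xp_embed m (h *: 'e_(inord j) + y) = h *: 'e_j + xp_embed m y.
Proof.
move=> jp; apply/matrixP => i s; rewrite (ord1 i) !mxE eqxx /=; case: ifP => sp.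
  suff -> : (inord s == inord j :> 'I_p.+2) = (s == j) by [].
  have sp2 : (s < p.+2)%N by rewrite ltnS (leq_trans sp).
  have jp2 : (j < p.+2)%N by rewrite ltnS (leq_trans jp).
  apply/eqP/eqP => [/(congr1 val)|->] //=.
  by rewrite (inordK sp2) (inordK jp2); apply: val_inj.
by case: eqP => [sj|_]; [move: sp; rewrite sj jp | rewrite mulr0 addr0].
Qed.

Lemma xp_embed_reflect (y : 'rV[R]_p.+2) : xp_embed m (reflect_r y) = xp_embed m y.
Proof.
apply/matrixP => i s; rewrite !mxE; case: ifP => // sp.
by rewrite (negbTE (inord_low_neq_max sp)).
Qed.

Lemma rcoord_reflect (y : 'rV[R]_p.+2) : rcoord (reflect_r y) = - rcoord y.
Proof. by rewrite /rcoord mxE eqxx. Qed.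

Lemma in_sphereN (w : 'rV[R]_m.+1) : in_sphere p w -> in_sphere p (- w).
Proof.
case=> low_w norm_w; split=> [s sp|]; first by rewrite mxE low_w ?oppr0.
by rewrite -norm_w; apply: eq_bigr => s _; rewrite mxE sqrrN.
Qed.

Lemma in_sphere_max : (p < m)%N -> in_sphere p ('e_ord_max : 'rV[R]_m.+1).
Proof.
move=> pm; split=> [s sp|].
  by rewrite mxE eqxx /=; case: eqP => // sE; move: sp; rewrite sE leqNgt pm.
rewrite (bigD1 ord_max) //= big1 ?addr0 => [|s sm]; first by rewrite mxE !eqxx expr1n.
by rewrite mxE eqxx /= (negbTE sm) expr0n.
Qed.

Lemma sum_low (V : zmodType) (H : nat -> V) : (p < m)%N ->
  \sum_(s < m.+1 | (s <= p)%N) H s = \sum_(0 <= s < p.+1) H s.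
Proof.
move=> pm; have pm1 : (p.+1 <= m.+1)%N by rewrite ltnS ltnW.
rewrite (big_nat_widen 0 p.+1 m.+1 _ _ pm1) big_mkord.
by apply: eq_bigl => s /=; rewrite ltnS.
Qed.

Lemma sum_high_const (V : zmodType) (c : V) : (p < m)%N ->
  \sum_(s < m.+1 | ~~ (s <= p)%N) c = c *+ (m - p).
Proof.
move=> pm; have pm1 : (p.+1 <= m.+1)%N by rewrite ltnS ltnW.
have : \sum_(s < m.+1) c =
    \sum_(s < m.+1 | (s <= p)%N) c + \sum_(s < m.+1 | ~~ (s <= p)%N) c.
  exact: bigID.
rewrite (sum_low (fun=> c) pm) -(big_mkord xpredT (fun=> c)) !sumr_const_nat !subn0.
by move/esym/(canRL (addKr _)) => ->; rewrite addrC -mulrnBr // subSS.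
Qed.

End Coordinates.

Section SphereNormalization.
Variable R : realType.

Lemma is_derive_norm_line n (w : 'rV[R]_n) j c :
  \sum_(s < n) w 0 s ^+ 2 = 1 ->
  is_derive (0 : R) 1 (fun h => Num.sqrt (\sum_(s < n) (h *: (c *: 'e_j) + w) 0 s ^+ 2))
    (c * w 0 j).
Proof.
move=> norm_w; pose u h : 'rV[R]_n := h *: (c *: 'e_j) + w.
have /is_derive_mxP du := is_derive_line (c *: 'e_j) w (0 : R).
have dS : is_derive (0 : R) 1 (fun h => \sum_(s < n) u h 0 s ^+ 2) (2 * w 0 j * c).
  rewrite (_ : (fun h => _) = \sum_(s < n) (fun h => u h 0 s ^+ 2)); last first.
    by apply/funext => h; rewrite fct_sumE.
  apply: is_derive_eq (is_derive_sum (fun s => is_deriveX 2 (du 0 s))) _.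
  rewrite (bigD1 j) //= big1 ?addr0 => [|s sj].
    by rewrite /u scale0r add0r !mxE !eqxx /= mulr1 expr1.
  by rewrite !mxE eqxx /= (negbTE sj) mulr0 scaler0.
have S0 : \sum_(s < n) u 0 0 s ^+ 2 = 1 by rewrite /u scale0r add0r.
have dsqrt : is_derive (\sum_(s < n) u 0 0 s ^+ 2) 1 Num.sqrt (2 * Num.sqrt 1)^-1.
  by rewrite S0; apply: is_derive1_sqrt; exact: ltr01.
have := is_derive1_comp dsqrt dS.
by rewrite sqrtr1 mulr1 -!mulrA mulKf ?pnatr_eq0 // mulrC.
Qed.

Lemma in_sphere_normalize p m (u : 'rV[R]_m.+1) :
  (forall s : 'I_m.+1, (s <= p)%N -> u 0 s = 0) -> 0 < \sum_(s < m.+1) u 0 s ^+ 2 ->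
  in_sphere p ((Num.sqrt (\sum_(s < m.+1) u 0 s ^+ 2))^-1 *: u).
Proof.
set S := \sum_(s < m.+1) _ => low_u S_gt0; split=> [s sp|].
  by rewrite mxE low_u ?mulr0.
have Sn0 : Num.sqrt S ^+ 2 != 0 by rewrite expf_neq0 // sqrtr_eq0 -ltNge.
rewrite (eq_bigr (fun s => (Num.sqrt S)^-2 * u 0 s ^+ 2)) => [|s _].
  by rewrite -mulr_sumr -/S -{2}(sqr_sqrtr (ltW S_gt0)) mulVf.
by rewrite mxE exprMn exprVn.
Qed.

End SphereNormalization.

Section RayLimit.
Variable R : realType.

Lemma Dx_cvg_within d m (mul : 'rV[R]_d.+1 -> 'rV[R]_d.+1 -> 'rV[R]_d.+1)
    (v : 'I_m.+1 -> 'rV[R]_d.+1) (f : 'rV[R]_m.+1 -> 'rV[R]_d.+1)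
    (S : set 'rV[R]_m.+1) x :
  (forall c, linear (mul c)) -> C1_on S f -> S x ->
  Dx mul v f @ within S (nbhs x) --> Dx mul v f x.
Proof.
move=> linmul [_ pd_cont] Sx; rewrite /Dx.
apply: (@cvg_big _ _ _ _ _ _ _ (within S (nbhs x))) => [|s _].
  exact: add_continuous.
have /subspace_continuousP/(_ x Sx) pd_s := pd_cont s.
exact: continuous_cvg _ (linear_rV_continuous (u := pd f x s) (linmul (v s))) pd_s.
Qed.

Lemma ray_limit_eq0 n (W : normedModType R) (S : set 'rV[R]_n) (g : 'rV[R]_n -> W) x e :
  g @ within S (nbhs x) --> g x ->
  (\forall h \near (0 : R)^'+, S (h *: e + x) /\ g (h *: e + x) = 0) -> g x = 0.
Proof.
move=> gx near0; pose P h := h *: e + x.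
have P0 : P 0 = x by rewrite /P scale0r add0r.
have P_cont : {for 0, continuous P}.
  have [P_ex _] := is_derive_line e x 0.
  exact/differentiable_continuous/derivable1_diffP.
have PS : P @ (0 : R)^'+ --> within S (nbhs x).
  move=> U U_x; have near_U : \forall h \near (0 : R), S (P h) -> U (P h).
    by apply: (P_cont (fun z => S z -> U z)); rewrite P0.
  suff : \forall h \near (0 : R), 0 < h -> U (P h) by [].
  near=> h => h_gt0.
  have [Sh _] : S (P h) /\ g (P h) = 0 by move: h_gt0; near: h; exact: near0.
  by move: Sh; near: h; exact: near_U.
have g0 : g \o P @ (0 : R)^'+ --> 0.
  apply: cvg_trans (near_eq_cvg _) (cvg_cst 0).
  by apply: filterS near0 => h [_ <-].
exact: cvg_unique (cvg_comp _ _ PS gx) g0.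
Unshelve. all: by end_near.
Qed.

End RayLimit.

Section SliceFunction.
Variables (R : realType) (d m p : nat).
Local Notation A := 'rV[R]_d.+1.
Variables (mul : A -> A -> A) (one : A) (conj : A -> A) (v : 'I_m.+1 -> A)
  (D : set 'rV[R]_p.+2) (F1 F2 : 'rV[R]_p.+2 -> A) (f : 'rV[R]_m.+1 -> A).
Hypotheses (algA : alt_algebra_anti_inv mul one conj) (pm : (p < m)%N)
  (basis_v : admissible_basis mul one conj v) (openD : open D)
  (reflectD : forall y, D y -> D (reflect_r y)) (stemF : stem_function D F1 F2)
  (C1_F1 : C1_on D F1) (C1_F2 : C1_on D F2) (f_induced : induced_by mul v D F1 F2 f).

(* The stem symmetry extends the defining formula of [f] to points with [r < 0]. *)
Lemma slice_eq y w : D y -> in_sphere p w ->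
  f (xp_embed m y + rcoord y *: w) = F1 y + mul (embA v w) (F2 y).
Proof.
move=> Dy sw; have [r_ge0|r_lt0] := leP 0 (rcoord y); first exact: f_induced.
have := f_induced (reflectD Dy) _ (in_sphereN sw).
rewrite xp_embed_reflect rcoord_reflect scaleNr scalerN opprK => ->; last first.
  by rewrite oppr_ge0 ltW.
by case: (stemF Dy) => -> ->; rewrite embAN (amulNl algA) (amulNr algA) opprK.
Qed.

Lemma slice_in_OmegaD y w : D y -> in_sphere p w ->
  @OmegaD R p m D (xp_embed m y + rcoord y *: w).
Proof.
move=> Dy sw; have [r_ge0|r_lt0] := leP 0 (rcoord y); first by exists y, w.
exists (reflect_r y), (- w); split; first exact: reflectD.
rewrite rcoord_reflect oppr_ge0 ltW //; split=> //; split; first exact: in_sphereN.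
by rewrite xp_embed_reflect scaleNr scalerN opprK.
Qed.

Lemma near_D_line y e : D y -> \forall h \near (0 : R), D (h *: e + y).
Proof.
move=> Dy; apply: (near_is_derive_in openD _ (is_derive_line e y 0)).
by rewrite scale0r add0r.
Qed.

Lemma is_derive_slice_low y w (j : 'I_m.+1) : D y -> in_sphere p w -> (j <= p)%N ->
  is_derive (xp_embed m y + rcoord y *: w) 'e_j f
    (pd F1 y (inord j) + mul (embA v w) (pd F2 y (inord j))).
Proof.
move=> Dy sw jp; apply/is_derive_dirP; set e := 'e_(inord j) : 'rV[R]_p.+2.
have /is_derive_dirP dF1 := derivableP (C1_F1.1 y Dy (inord j)).
have /is_derive_dirP dF2 := derivableP (C1_F2.1 y Dy (inord j)).
apply: near_eq_is_derive (is_deriveD dF1 (is_derive_linear (amul_linear_r algA _) dF2)).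
near=> h; have Dh : D (h *: e + y) by near: h; apply: near_D_line.
rewrite -[LHS]/(F1 (h *: e + y) + mul (embA v w) (F2 (h *: e + y))).
by rewrite -slice_eq // xp_embed_shift_low // rcoord_shift_low // addrA.
Unshelve. all: by end_near.
Qed.

Lemma is_derive_slice_high y w (j : 'I_m.+1) : D y -> in_sphere p w -> ~~ (j <= p)%N ->
  rcoord y != 0 ->
  is_derive (xp_embed m y + rcoord y *: w) 'e_j f
   (w 0 j *: pd F1 y ord_max +
    (mul (embA v ((rcoord y)^-1 *: 'e_j - (w 0 j / rcoord y) *: w)) (F2 y)
     + mul (embA v w) (w 0 j *: pd F2 y ord_max))).
Proof.
move=> Dy sw jp r0; apply/is_derive_dirP.
set r := rcoord y; set e := 'e_ord_max : 'rV[R]_p.+2.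
(* x + h v_j = x_p + (r N h) (u h / N h): moving along v_j turns the radius
   into [r N h] and the direction into the normalization of [u h]. *)
pose u h : 'rV[R]_m.+1 := h *: (r^-1 *: 'e_j) + w.
pose N h := Num.sqrt (\sum_(s < m.+1) u h 0 s ^+ 2).
pose rho h := r * N h - r.
have u0 : u 0 = w by rewrite /u scale0r add0r.
have N0 : N 0 = 1 by rewrite /N u0; case: sw => _ ->; rewrite sqrtr1.
have rho0 : rho 0 = 0 by rewrite /rho N0 mulr1 subrr.
have dN : is_derive (0 : R) 1 N (r^-1 * w 0 j) by apply: is_derive_norm_line; case: sw.
have drho : is_derive (0 : R) 1 rho (w 0 j).
  have := is_deriveB (is_deriveZ r dN) (is_derive_cst r (0 : R) 1).
  by rewrite subr0 /GRing.scale /= mulrA divff // mul1r.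
have dom : is_derive (0 : R) 1 (fun h => embA v ((N h)^-1 *: u h))
    (embA v (r^-1 *: 'e_j - (w 0 j / r) *: w)).
  have N0n : N 0 != 0 by rewrite N0 oner_neq0.
  have dNV := is_deriveV N0n dN.
  apply: is_derive_eq (is_derive_linear (embA_linear v)
    (is_derive_scale dNV (is_derive_line _ w 0))) _.
  by rewrite N0 expr1n invr1 scaleN1r scale0r add0r scale1r addrC scaleNr mulrC.
have dG (F : 'rV[R]_p.+2 -> A) : C1_on D F ->
    is_derive (0 : R) 1 (fun h => F (rho h *: e + y)) (w 0 j *: pd F y ord_max).
  case=> dF _.
  apply: (@is_derive_comp_real _ _ _ (fun h => F (h *: e + y)) rho _ _ _ _ drho).
  by rewrite rho0; apply/is_derive_dirP/derivableP/dF.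
have nearN : \forall h \near (0 : R), 0 < N h.
  by apply: (near_is_derive_in (@open_gt _ 0) _ dN); rewrite /= N0 ltr01.
have nearD : \forall h \near (0 : R), D (rho h *: e + y).
  apply: (near_is_derive_in openD _
    (is_derive_comp_real (is_derive_line e y (rho 0)) drho)).
  by rewrite rho0 scale0r add0r.
apply: is_derive_eq; first apply: near_eq_is_derive (is_deriveD (dG F1 C1_F1)
  (is_derive_bilinear (amul_linear_l algA) (amul_linear_r algA) dom (dG F2 C1_F2))).
  near=> h; have Dh : D (rho h *: e + y) by near: h.
  have Nh : 0 < N h by near: h.
  have sw_h : in_sphere p ((N h)^-1 *: u h).
    apply: in_sphere_normalize => [s sp|]; last by rewrite -sqrtr_gt0.
    rewrite !mxE; case: sw => -> // _.
    by rewrite (_ : s == j = false) ?mulr0 ?addr0 //; apply: contraNF jp => /eqP <-.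
  rewrite -[LHS]/(F1 (rho h *: e + y) +
    mul (embA v ((N h)^-1 *: u h)) (F2 (rho h *: e + y))).
  rewrite -slice_eq // xp_embed_shift_max rcoord_shift_max; congr f.
  rewrite /rho subrK scalerA mulfK ?gt_eqF // /u scalerDr !scalerA mulrCA divff // mulr1.
  by rewrite addrA (addrC (xp_embed m y)) addrA.
by rewrite /= rho0 scale0r add0r N0 invr1 scale1r u0.
Unshelve. all: by end_near.
Qed.

Lemma pd_slice_low y w (s : 'I_m.+1) : D y -> in_sphere p w -> (s <= p)%N ->
  pd f (xp_embed m y + rcoord y *: w) s
  = pd F1 y (inord s) + mul (embA v w) (pd F2 y (inord s)).
Proof. by move=> Dy sw sp; have [_ <-] := is_derive_slice_low Dy sw sp. Qed.

Lemma Dx_slice_low y w : D y -> in_sphere p w ->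
  \sum_(s < m.+1 | (s <= p)%N) mul (v s) (pd f (xp_embed m y + rcoord y *: w) s)
  = Dxp mul v F1 y + mul (embA v w) (Dxp_bar mul v F2 y).
Proof.
move=> Dy sw; set om := embA v w.
pose G s := mul (v (inord s)) (pd F1 y (inord s) + mul om (pd F2 y (inord s))).
rewrite (eq_bigr (fun s : 'I_m.+1 => G s)) => [|s sp]; last first.
  by rewrite /G inord_val pd_slice_low.
rewrite (sum_low G pm) /G (eq_bigr _ (fun s _ => amulDr algA _ _ _)) big_split /=.
congr (_ + _); rewrite /Dxp_bar big_ltn // (amulBr algA) (amul_sumr algA) -sumrN.
have i0m : inord 0 = ord0 :> 'I_m.+1 by apply: val_inj; rewrite /= inordK.
have i0p : inord 0 = ord0 :> 'I_p.+2 by apply: val_inj; rewrite /= inordK.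
rewrite i0m i0p (basis0 basis_v) (amul1l algA); congr (_ + _).
apply: eq_big_nat => s /andP[s_gt0 s_lep1].
have sm : (s < m.+1)%N by rewrite ltnS (leq_trans _ (ltnW pm)) // -ltnS.
apply: (basis_sphere_mul algA basis_v sw); last by rewrite inordK // -ltnS.
by apply: contraTneq s_gt0 => /(congr1 val) /=; rewrite inordK // => ->.
Qed.

Lemma Dx_slice_high y w : D y -> in_sphere p w -> rcoord y != 0 ->
  \sum_(s < m.+1 | ~~ (s <= p)%N) mul (v s) (pd f (xp_embed m y + rcoord y *: w) s)
  = mul (embA v w) (pd F1 y ord_max) - pd F2 y ord_max
    + ((rcoord y)^-1 * (1 - (m - p)%:R)) *: F2 y.
Proof.
move=> Dy sw r0; set r := rcoord y; set om := embA v w.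
have sum_w (G : 'I_m.+1 -> A) :
    \sum_(s < m.+1 | ~~ (s <= p)%N) w 0 s *: G s = \sum_(s < m.+1) w 0 s *: G s.
  rewrite [RHS](bigID (fun s : 'I_m.+1 => (s <= p)%N)) /=.
  rewrite [X in _ = X + _]big1 ?add0r // => s sp.
  by case: sw => -> // _; rewrite scale0r.
have sum_om a : \sum_(s < m.+1) w 0 s *: mul (v s) a = mul om a.
  by rewrite /om /embA (amul_suml algA); apply: eq_bigr => s _; rewrite (amulZl algA).
rewrite (eq_bigr (fun s => w 0 s *: mul (v s) (pd F1 y ord_max)
    + w 0 s *: mul (v s) (mul om (pd F2 y ord_max))
    - (r^-1 *: F2 y + r^-1 *: (w 0 s *: mul (v s) (mul om (F2 y)))))) => [|s sp].
  rewrite sumrB !big_split /= -!scaler_sumr !sum_w !sum_om (sum_high_const _ pm).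
  rewrite !(sphere_mulK algA basis_v sw) -scaler_nat.
  by apply/rowP => k; rewrite !mxE; ring.
rewrite /pd; have [_ ->] := is_derive_slice_high Dy sw sp r0.
have s0 : s != ord0 by apply: contraNneq sp => ->.
rewrite embA_linear embAN !embAZ embA_delta -/om.
rewrite !(amulDl algA) !(amulNl algA) !(amulZl algA) !(amulDr algA) !(amulNr algA).
rewrite !(amulZr algA) -(left_alternative algA) (basis_sqr algA basis_v s0).
rewrite (amulNl algA) (amul1l algA).
by apply/rowP => k; rewrite !mxE; ring.
Qed.

Lemma Dx_slice y w : D y -> in_sphere p w -> rcoord y != 0 ->
  Dx mul v f (xp_embed m y + rcoord y *: w) =
  (Dxp mul v F1 y - pd F2 y ord_max - (((m - p)%:R - 1) / rcoord y) *: F2 y)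
  + mul (embA v w) (Dxp_bar mul v F2 y + pd F1 y ord_max).
Proof.
move=> Dy sw r0; rewrite /Dx (bigID (fun s : 'I_m.+1 => (s <= p)%N)) /=.
rewrite Dx_slice_low // Dx_slice_high // (amulDr algA).
by apply/rowP => k; rewrite !mxE; ring.
Qed.

Lemma stem_eqs_of_monogenic :
  (forall x, @OmegaD R p m D x -> Dx mul v f x = 0) ->
  forall y, D y -> rcoord y != 0 ->
    Dxp mul v F1 y - pd F2 y ord_max = (((m - p)%:R - 1) / rcoord y) *: F2 y /\
    Dxp_bar mul v F2 y + pd F1 y ord_max = 0.
Proof.
move=> monogenic y Dy r0.
pose a := Dxp mul v F1 y - pd F2 y ord_max - (((m - p)%:R - 1) / rcoord y) *: F2 y.
pose b := Dxp_bar mul v F2 y + pd F1 y ord_max.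
have s_max := in_sphere_max R pm.
have plus := monogenic _ (slice_in_OmegaD Dy s_max).
have minus := monogenic _ (slice_in_OmegaD Dy (in_sphereN s_max)).
rewrite Dx_slice // -/a -/b in plus.
rewrite (Dx_slice Dy (in_sphereN s_max) r0) -/a -/b (embAN v) (amulNl algA) in minus.
have [a0 omb0] := add_sub_eq0 plus minus.
split; first by apply/eqP; rewrite -subr_eq0; apply/eqP.
by rewrite -/b -[b]opprK -(sphere_mulK algA basis_v s_max b) omb0 (amul0r algA) oppr0.
Qed.

Lemma monogenic_of_stem_eqs : C1_on (@OmegaD R p m D) f ->
  (forall y, D y -> rcoord y != 0 ->
    Dxp mul v F1 y - pd F2 y ord_max = (((m - p)%:R - 1) / rcoord y) *: F2 y /\
    Dxp_bar mul v F2 y + pd F1 y ord_max = 0) ->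
  forall x, @OmegaD R p m D x -> Dx mul v f x = 0.
Proof.
move=> C1_f stem_eqs x [y [w [Dy [_ [sw ->]]]]].
have Dx0 y' w' : D y' -> in_sphere p w' -> rcoord y' != 0 ->
    Dx mul v f (xp_embed m y' + rcoord y' *: w') = 0.
  move=> Dy' sw' r0; rewrite Dx_slice //; have [-> ->] := stem_eqs y' Dy' r0.
  by rewrite subrr (amul0r algA) addr0.
have [r0|] := eqVneq (rcoord y) 0; last exact: Dx0.
(* On the axis [r = 0], pass to the limit along the ray in the direction v_m. *)
apply: (ray_limit_eq0 (e := 'e_ord_max)).
  exact: Dx_cvg_within (amul_linear_r algA) C1_f (slice_in_OmegaD Dy sw).
suff : \forall h \near (0 : R), 0 < h ->
    @OmegaD R p m D (h *: 'e_ord_max + (xp_embed m y + rcoord y *: w)) /\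
    Dx mul v f (h *: 'e_ord_max + (xp_embed m y + rcoord y *: w)) = 0 by [].
apply: filterS (near_D_line 'e_ord_max Dy) => h Dh h_gt0.
have -> : h *: 'e_ord_max + (xp_embed m y + rcoord y *: w) =
    xp_embed m (h *: 'e_ord_max + y) + rcoord (h *: 'e_ord_max + y) *: 'e_ord_max.
  by rewrite xp_embed_shift_max rcoord_shift_max r0 scale0r !addr0 addrC.
have s_max := in_sphere_max R pm.
split; first exact: slice_in_OmegaD.
by apply: Dx0; rewrite // rcoord_shift_max r0 addr0 gt_eqF.
Qed.

End SliceFunction.

Unset Implicit Arguments.

Theorem lemma4p8 (R : realType) (d : nat)
  (mul : 'rV[R]_d.+1 -> 'rV[R]_d.+1 -> 'rV[R]_d.+1) (one : 'rV[R]_d.+1)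
  (conj : 'rV[R]_d.+1 -> 'rV[R]_d.+1)
  (m p : nat) (v : 'I_m.+1 -> 'rV[R]_d.+1)
  (D : set 'rV[R]_p.+2)
  (F1 F2 : 'rV[R]_p.+2 -> 'rV[R]_d.+1) (f : 'rV[R]_m.+1 -> 'rV[R]_d.+1) :
  (1 < d.+1)%N ->
  alt_algebra_anti_inv mul one conj ->
  (1 <= m)%N -> (p < m)%N ->
  admissible_basis mul one conj v ->
  open D -> connected D ->
  (forall y, D y -> D (reflect_r y)) ->
  stem_function D F1 F2 ->
  C1_on D F1 -> C1_on D F2 ->
  induced_by mul v D F1 F2 f ->
  C1_on ((@OmegaD R p m D)) f ->
  (forall x, (@OmegaD R p m D) x -> Dx mul v f x = 0) <->
  (forall y, D y -> rcoord y != 0 ->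
     Dxp mul v F1 y - pd F2 y ord_max
       = (((m - p)%:R - 1) / rcoord y) *: F2 y /\
     Dxp_bar mul v F2 y + pd F1 y ord_max = 0).
Proof.
move=> _ algA _ pm basis_v openD _ reflectD stemF C1_F1 C1_F2 f_induced C1_f.
split.
  exact: (stem_eqs_of_monogenic algA pm basis_v openD reflectD stemF C1_F1 C1_F2
    f_induced).
exact: (monogenic_of_stem_eqs algA pm basis_v openD reflectD stemF C1_F1 C1_F2
  f_induced C1_f).
Qed.
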